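(* Let $r\ge2$ and $p\ge2$ be integers, $\mathcal{A}$ the adjacency tensor of an $r$-uniform (possibly weighted) hypergraph on $n$ vertices, and $f(\mathbf{x})=(r-1)!\,\mathcal{A}\mathbf{x}^r/\|\mathbf{x}\|_p^r$. Let $\mathbf{x}_k$ be an iterate of the CSRH iteration (described in the context) with $\nabla f(\mathbf{x}_k)\neq0$, and let $\mathbf{p}_k$ be the corresponding search direction. If $0<c_1<c_2<1$, then there exists $\alpha_k>0$ such that $$f(\mathbf{x}_{k+1}(\alpha_k))\ge f(\mathbf{x}_k)+c_1\alpha_k\nabla f(\mathbf{x}_k)^\top\mathbf{p}_k,\qquad \nabla f(\mathbf{x}_{k+1}(\alpha_k))^\top\mathbf{p}_k\le c_2\nabla f(\mathbf{x}_k)^\top\mathbf{p}_k,$$ where $$\mathbf{x}_{k+1}(\alpha)=\frac{[(2-\alpha\mathbf{x}_k^\top\mathbf{p}_k)^2-\|\alpha\mathbf{p}_k\|^2]\mathbf{x}_k+4\alpha\mathbf{p}_k}{4+\|\alpha\mathbf{p}_k\|^2-(\alpha\mathbf{x}_k^\top\mathbf{p}_k)^2}.$$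
   Context: Adjacency tensor: for a weighted $r$-uniform hypergraph with vertex set $\{1,\dots,n\}$ and edge weights $s(e)>0$, $\mathcal{A}=(a_{i_1\cdots i_r})$ is symmetric with $a_{i_1\cdots i_r}=s(e)/(r-1)!$ if $\{i_1,\dots,i_r\}=e$ is an edge and $0$ otherwise; $\mathcal{A}\mathbf{x}^r=\sum a_{i_1\cdots i_r}x_{i_1}\cdots x_{i_r}$, $(\mathcal{A}\mathbf{x}^{r-1})_i=\sum a_{ii_2\cdots i_r}x_{i_2}\cdots x_{i_r}$, $\|\mathbf{x}\|_p=(\sum|x_i|^p)^{1/p}$, $\|\cdot\|$ Euclidean. $\nabla f(\mathbf{x})=\frac{r!}{\|\mathbf{x}\|_p^r}(\mathcal{A}\mathbf{x}^{r-1}-\mathcal{A}\mathbf{x}^r\|\mathbf{x}\|_p^{-p}\mathbf{x}^{\langle p-1\rangle})$ with $(\mathbf{x}^{\langle p-1\rangle})_i=|x_i|^{p-1}\mathrm{sgn}(x_i)$. CSRH iteration: fix $0<c_1<c_2<1$, $\tfrac14<\tau<1$, $\epsilon>0$, a unit vector $\mathbf{x}_0$, and $\mathbf{p}_0=\nabla f(\mathbf{x}_0)$. At step $k$, choose $\alpha_k>0$ satisfying the two (Wolfe) inequalities $f(\mathbf{x}_{k+1}(\alpha_k))\ge f(\mathbf{x}_k)+c_1\alpha_k\nabla f(\mathbf{x}_k)^\top\mathbf{p}_k$ and $\nabla f(\mathbf{x}_{k+1}(\alpha_k))^\top\mathbf{p}_k\le c_2\nabla f(\mathbf{x}_k)^\top\mathbf{p}_k$,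 with $\mathbf{x}_{k+1}(\alpha)$ given by the displayed formula; set $\mathbf{x}_{k+1}=\mathbf{x}_{k+1}(\alpha_k)$, $\mathbf{d}_k=\mathbf{x}_{k+1}-\mathbf{x}_k$, $\mathbf{y}_k=\nabla f(\mathbf{x}_{k+1})-\nabla f(\mathbf{x}_k)$, $\beta_k=\max(0,\tilde\beta_k)$ where $\tilde\beta_k=(\tau\mathbf{d}_k\|\mathbf{y}_k\|^2/(\mathbf{d}_k^\top\mathbf{y}_k)-\mathbf{y}_k)^\top\nabla f(\mathbf{x}_{k+1})/(\mathbf{d}_k^\top\mathbf{y}_k)$ if $|\mathbf{d}_k^\top\mathbf{y}_k|\ge\epsilon\|\mathbf{d}_k\|\|\mathbf{y}_k\|$ and $\tilde\beta_k=0$ otherwise, and $\mathbf{p}_{k+1}=\nabla f(\mathbf{x}_{k+1})+\beta_k\mathbf{d}_k$. All iterates are unit vectors. *)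

From mathcomp Require Import all_boot all_order all_algebra.
From mathcomp Require Import reals exp.
Set Implicit Arguments. Unset Strict Implicit. Unset Printing Implicit Defensive.
Import Order.TTheory GRing.Theory Num.Theory.
Local Open Scope ring_scope.

Section CSRH.
Variables (R : realType) (n r pp : nat).
Variables (E : {set {set 'I_n}}) (s : {set 'I_n} -> R).

Definition vec := 'I_n -> R.

Definition adj (t : r.-tuple 'I_n) : R :=
  if [set i in t] \in E then s [set i in t] / (r.-1)`!%:R else 0.

Definition Axr (x : vec) : R :=
  \sum_(t : r.-tuple 'I_n) adj t * \prod_(j < r) x (tnth t j).

Definition Axr1 (x : vec) (i : 'I_n) : R :=
  \sum_(t : r.-tuple 'I_n | nth i t 0 == i)
     adj t * \prod_(j < r | (0 < j)%N) x (tnth t j).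

Definition dot (x y : vec) : R := \sum_i x i * y i.

Definition normp (x : vec) : R := (\sum_i `|x i| ^+ pp) `^ (pp%:R^-1).

Definition fobj (x : vec) : R := (r.-1)`!%:R * Axr x / normp x ^+ r.

Definition xpow (x : vec) : vec := fun i => `|x i| ^+ pp.-1 * Num.sg (x i).

Definition gradf (x : vec) : vec := fun i =>
  r`!%:R / normp x ^+ r *
  (Axr1 x i - Axr x * (normp x ^+ pp)^-1 * xpow x i).

Definition xnext (x p : vec) (a : R) : vec := fun i =>
  (((2 - a * dot x p) ^+ 2 - a ^+ 2 * dot p p) * x i + 4 * a * p i)
  / (4 + a ^+ 2 * dot p p - (a * dot x p) ^+ 2).

Definition wolfe (c1 c2 : R) (x p : vec) (a : R) : Prop :=
  fobj (xnext x p a) >= fobj x + c1 * a * dot (gradf x) p /\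
  dot (gradf (xnext x p a)) p <= c2 * dot (gradf x) p.

Definition vsub (x y : vec) : vec := fun i => x i - y i.

Definition beta (tau eps : R) (x x' : vec) : R :=
  let d := vsub x' x in
  let y := vsub (gradf x') (gradf x) in
  let dy := dot d y in
  let bt :=
    if Num.sqrt (dot d d) * Num.sqrt (dot y y) * eps <= `|dy|
    then (tau * dot y y / dy * dot d (gradf x') - dot y (gradf x')) / dy
    else 0 in
  Num.max 0 bt.

Definition csrh_run (c1 c2 tau eps : R) (xs ps : nat -> vec) (als : nat -> R)
    (k : nat) : Prop :=
  dot (xs 0%N) (xs 0%N) = 1 /\
  ps 0%N = gradf (xs 0%N) /\
  forall j : nat, (j < k)%N ->
    [/\ 0 < als j, wolfe c1 c2 (xs j) (ps j) (als j),
        xs j.+1 = xnext (xs j) (ps j) (als j) &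
        ps j.+1 = (fun i => gradf (xs j.+1) i +
                     beta tau eps (xs j) (xs j.+1) * vsub (xs j.+1) (xs j) i)].

End CSRH.

From mathcomp Require Import all_boot all_order all_algebra perm.
From mathcomp Require Import reals exp.
From mathcomp Require Import boolp classical_sets functions topology normedtype.
From mathcomp Require Import derive realfun ring lra.
Import Order.TTheory GRing.Theory Num.Theory.
Import numFieldNormedType.Exports.
Set Implicit Arguments. Unset Strict Implicit. Unset Printing Implicit Defensive.
Local Open Scope ring_scope.

(* The curve a |-> x_{k+1}(a) stays on the unit sphere, on which f is bounded and,
   being homogeneous of degree 0, has its gradient orthogonal to the point (Euler).
   Hence phi(a) := f(x_{k+1}(a)) has phi'(0) = grad f(x_k).p_k, which is positive for
   the CSRH direction because tau > 1/4 (the Hager-Zhang descent estimate). So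
   h(a) := phi(a) - phi(0) - c1 a phi'(0) first increases and eventually becomes
   negative; at an interior maximum m > 0 of h the sufficient increase condition holds
   and phi'(m) = c1 phi'(0). Writing x_{k+1}(a) = u(a) x_k + v(a) p_k with
   u = num / den and v = 4 a / den, orthogonality of grad f(x_{k+1}(m)) to x_{k+1}(m)
   and the Wronskian u v' - v u' = 4 / den turn this into
   grad f(x_{k+1}(m)).p_k = (num(m) / 4) c1 phi'(0) <= c1 phi'(0) < c2 phi'(0),
   where num(m) <= 4 because m > 0 and x_k.p_k >= 0. *)

Section DotProduct.
Variables (R : realType) (n : nat).
Implicit Types (x y p g : vec R n) (a b : R).

Lemma dotC x y : dot x y = dot y x.
Proof. by apply: eq_bigr => i _; rewrite mulrC. Qed.

Lemma dot_lincombr g x p a b :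
  dot g (fun i => a * x i + b * p i) = a * dot g x + b * dot g p.
Proof. by rewrite /dot !mulr_sumr -big_split /=; apply: eq_bigr => i _; ring. Qed.

Lemma dot_addr_scale g x p b :
  dot g (fun i => x i + b * p i) = dot g x + b * dot g p.
Proof. by rewrite /dot mulr_sumr -big_split /=; apply: eq_bigr => i _; ring. Qed.

Lemma dot_vsubr g x y : dot g (vsub x y) = dot g x - dot g y.
Proof. by rewrite /dot -sumrB; apply: eq_bigr => i _; rewrite mulrBr. Qed.

Lemma dot_lincomb_self x p a b :
  dot (fun i => a * x i + b * p i) (fun i => a * x i + b * p i) =
  a ^+ 2 * dot x x + 2 * a * b * dot x p + b ^+ 2 * dot p p.
Proof. by rewrite /dot !mulr_sumr -!big_split /=; apply: eq_bigr => i _; ring. Qed.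

Lemma dot_self_ge0 x : 0 <= dot x x.
Proof. by apply: sumr_ge0 => i _; rewrite -expr2 sqr_ge0. Qed.

Lemma dot_self_gt0 x : x <> (fun _ => 0) -> 0 < dot x x.
Proof.
move=> x0; rewrite lt_def dot_self_ge0 andbT; apply: contra_notN x0.
move=> /eqP/psumr_eq0P x2_eq0; apply/funext => i; apply/eqP.
by rewrite -sqrf_eq0 expr2 x2_eq0 // => j _; rewrite -expr2 sqr_ge0.
Qed.

Lemma dot_unit_neq0 x : dot x x = 1 -> x <> (fun _ => 0).
Proof.
move=> x1 x0; have := @ltr01 R; rewrite -x1 x0 /dot big1 ?ltxx // => i _.
exact: mul0r.
Qed.

Lemma dot_unit_sqr_le x p : dot x x = 1 -> dot x p ^+ 2 <= dot p p.
Proof.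
move=> x1; have := dot_self_ge0 (fun i => - dot x p * x i + 1 * p i).
by rewrite dot_lincomb_self x1; lra.
Qed.

Lemma dot_unit_le1 x y : dot x x = 1 -> dot y y = 1 -> dot x y <= 1.
Proof.
move=> x1 y1; have := dot_self_ge0 (fun i => 1 * x i + (-1) * y i).
by rewrite dot_lincomb_self x1 y1; lra.
Qed.

End DotProduct.

Section Retraction.
Variables (R : realType) (n : nat).
Implicit Types (x p : vec R n) (a : R).

Definition xnext_den x p a : R := 4 + a ^+ 2 * dot p p - (a * dot x p) ^+ 2.
Definition xnext_num x p a : R := (2 - a * dot x p) ^+ 2 - a ^+ 2 * dot p p.
Definition xnext_cx x p a : R := xnext_num x p a / xnext_den x p a.
Definition xnext_cp x p a : R := 4 * a / xnext_den x p a.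

Lemma xnextE x p a :
  xnext x p a = (fun i => xnext_cx x p a * x i + xnext_cp x p a * p i).
Proof.
by apply/funext => i; rewrite /xnext /xnext_cx /xnext_cp /xnext_num /xnext_den; ring.
Qed.

Lemma xnext0 x p : xnext x p 0 = x.
Proof.
apply/funext => i; rewrite /xnext.
have -> : 4 + 0 ^+ 2 * dot p p - (0 * dot x p) ^+ 2 = 4 :> R by ring.
by field.
Qed.

Lemma xnext_den_ge4 x p a : dot x x = 1 -> 4 <= xnext_den x p a.
Proof.
move=> x1; have := dot_unit_sqr_le p x1.
rewrite /xnext_den -subr_ge0 => /(mulr_ge0 (sqr_ge0 a)).
by rewrite exprMn; lra.
Qed.

Lemma xnext_den_neq0 x p a : dot x x = 1 -> xnext_den x p a != 0.
Proof. by move=> /(xnext_den_ge4 p a); apply: contraTneq => ->; lra. Qed.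

Lemma xnext_num_le4 x p a :
  dot x x = 1 -> 0 <= a -> 0 <= dot x p -> xnext_num x p a <= 4.
Proof.
move=> x1 a0 xp0; have := dot_unit_sqr_le p x1.
rewrite /xnext_num -subr_ge0 => /(mulr_ge0 (sqr_ge0 a)).
have : 0 <= a * dot x p by rewrite mulr_ge0.
nra.
Qed.

(* The numerator and denominator satisfy num^2 + 8 a (x.p) num + 16 a^2 |p|^2 = den^2. *)
Lemma dot_xnext_self x p a :
  dot x x = 1 -> dot (xnext x p a) (xnext x p a) = 1.
Proof.
move=> x1; have den0 := xnext_den_neq0 p a x1.
rewrite xnextE dot_lincomb_self x1 /xnext_cx /xnext_cp.
apply: (mulIf (expf_neq0 2 den0)); rewrite mul1r.
by move: den0; rewrite /xnext_num /xnext_den => den0; field.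
Qed.

End Retraction.

Section RetractionVelocity.
Variables (R : realType) (n : nat).
Implicit Types (x p : vec R n) (a : R).

Definition xnext_den' x p a : R := 2 * a * (dot p p - dot x p ^+ 2).
Definition xnext_num' x p a : R := - 2 * dot x p * (2 - a * dot x p) - 2 * a * dot p p.
Definition xnext_cx' x p a : R :=
  (xnext_num' x p a * xnext_den x p a - xnext_num x p a * xnext_den' x p a)
  / xnext_den x p a ^+ 2.
Definition xnext_cp' x p a : R :=
  (4 * xnext_den x p a - 4 * a * xnext_den' x p a) / xnext_den x p a ^+ 2.
Definition xnext_vel x p a : vec R n :=
  fun i => xnext_cx' x p a * x i + xnext_cp' x p a * p i.

Lemma is_derive_xnext_cx x p a :
  dot x x = 1 -> is_derive a 1 (xnext_cx x p) (xnext_cx' x p a).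
Proof.
move=> x1; have den0 := xnext_den_neq0 p a x1.
apply: is_derive_eq; rewrite /xnext_cx' /xnext_num' /xnext_den' /GRing.scale /=.
by field.
Qed.

Lemma is_derive_xnext_cp x p a :
  dot x x = 1 -> is_derive a 1 (xnext_cp x p) (xnext_cp' x p a).
Proof.
move=> x1; have den0 := xnext_den_neq0 p a x1.
apply: is_derive_eq; rewrite /xnext_cp' /xnext_den' /GRing.scale /=.
by field.
Qed.

Lemma is_derive_xnext x p a i : dot x x = 1 ->
  is_derive a 1 (fun b => xnext x p b i) (xnext_vel x p a i).
Proof.
move=> x1; have dcx := is_derive_xnext_cx p a x1; have dcp := is_derive_xnext_cp p a x1.
under [fun b => _]funext do rewrite xnextE.
by apply: is_derive_eq; rewrite /xnext_vel /GRing.scale /=; ring.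
Qed.

Lemma xnext_vel0 x p : xnext_vel x p 0 = (fun i => - dot x p * x i + 1 * p i).
Proof.
apply/funext => i; rewrite /xnext_vel /xnext_cx' /xnext_cp' /xnext_num'.
rewrite /xnext_den' /xnext_num /xnext_den.
by congr (_ * _ + _ * _); field.
Qed.

Lemma xnext_wronskian x p a : dot x x = 1 ->
  xnext_cx x p a * xnext_cp' x p a - xnext_cp x p a * xnext_cx' x p a =
  4 / xnext_den x p a.
Proof.
move=> x1; have := xnext_den_neq0 p a x1.
rewrite /xnext_cx /xnext_cp /xnext_cx' /xnext_cp' /xnext_num' /xnext_den'.
rewrite /xnext_num /xnext_den => den0.
by field.
Qed.

End RetractionVelocity.

Section Homogeneity.
Variables (R : realType) (n r pp : nat) (E : {set {set 'I_n}}) (s : {set 'I_n} -> R).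
Hypothesis pp_gt0 : (0 < pp)%N.
Implicit Types (x v : vec R n).

Definition abs_pow_sum x : R := \sum_i `|x i| ^+ pp.

Lemma abs_pow_sum_ge0 x : 0 <= abs_pow_sum x.
Proof. by apply: sumr_ge0 => i _; rewrite exprn_ge0. Qed.

Lemma abs_pow_sum_gt0 x : x <> (fun _ => 0) -> 0 < abs_pow_sum x.
Proof.
move=> x0; rewrite lt_def abs_pow_sum_ge0 andbT; apply: contra_notN x0.
move=> /eqP/psumr_eq0P xp_eq0; apply/funext => i; apply/eqP.
have /eqP := xp_eq0 (fun j _ => exprn_ge0 pp (normr_ge0 (x j))) i isT.
by rewrite expf_eq0 pp_gt0 normr_eq0.
Qed.

Lemma normpE x : normp pp x = abs_pow_sum x `^ pp%:R^-1.
Proof. by []. Qed.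

Lemma normp_pow x : normp pp x ^+ pp = abs_pow_sum x.
Proof.
rewrite -powR_mulrn ?powR_ge0 // -powRrM mulVf ?powRr1 ?abs_pow_sum_ge0 //.
by rewrite pnatr_eq0 -lt0n.
Qed.

Lemma normp_gt0 x : x <> (fun _ => 0) -> 0 < normp pp x.
Proof. by move=> x0; rewrite powR_gt0 // abs_pow_sum_gt0. Qed.

Lemma abs_le_normp x i : `|x i| <= normp pp x.
Proof.
rewrite -(ler_pXn2r pp_gt0) ?nnegrE ?powR_ge0 // normp_pow /abs_pow_sum.
by rewrite (bigD1 i) //= lerDl sumr_ge0 // => j _; rewrite exprn_ge0.
Qed.

Lemma dot_xpow_self x : dot (xpow pp x) x = abs_pow_sum x.
Proof.
by apply: eq_bigr => i _; rewrite /xpow -mulrA -normrEsg -exprSr prednK.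
Qed.

Lemma dot_gradf x v : dot (gradf r pp E s x) v =
  r`!%:R / normp pp x ^+ r * (dot (Axr1 r E s x) v -
     Axr r E s x / abs_pow_sum x * dot (xpow pp x) v).
Proof.
rewrite /dot /gradf normp_pow mulr_sumr -sumrB mulr_sumr.
by apply: eq_bigr => i _; ring.
Qed.

End Homogeneity.

Section SymmetricTensor.
Variables (R : realType) (n r : nat) (E : {set {set 'I_n}}) (s : {set 'I_n} -> R).
Hypothesis r_gt0 : (0 < r)%N.
Let o : 'I_r := Ordinal r_gt0.
Implicit Types (x v w : vec R n).

Definition tuple_swap (j : 'I_r) (t : r.-tuple 'I_n) : r.-tuple 'I_n :=
  [tuple tnth t (tperm o j l) | l < r].

Lemma tuple_swapK j : involutive (tuple_swap j).
Proof.
by move=> t; apply: eq_from_tnth => l; rewrite !tnth_mktuple tpermK.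
Qed.

Lemma adj_tuple_swap j t : adj E s (tuple_swap j t) = adj E s t.
Proof.
rewrite /adj; suff -> : [set i in tuple_swap j t] = [set i in t] by [].
apply/setP => i; rewrite !inE; apply/idP/idP => /tnthP [l ->].
  by rewrite tnth_mktuple mem_tnth.
by apply/tnthP; exists (tperm o j l); rewrite tnth_mktuple tpermK.
Qed.

Lemma dot_Axr1E w v : dot (Axr1 r E s w) v =
  \sum_(t : r.-tuple 'I_n) adj E s t * (v (tnth t o) * \prod_(l < r | l != o) w (tnth t l)).
Proof.
rewrite [RHS](partition_big (fun t : r.-tuple 'I_n => tnth t o) xpredT) //=.
apply: eq_bigr => i _; rewrite /Axr1 mulr_suml.
apply: eq_big => [t|t /eqP ti]; first by rewrite (tnth_nth i).
rewrite (tnth_nth i) ti mulrCA mulrC; congr (_ * (_ * _)).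
by apply: eq_bigl => l; rewrite lt0n.
Qed.

Lemma dot_Axr1_self x : dot (Axr1 r E s x) x = Axr r E s x.
Proof.
rewrite dot_Axr1E; apply: eq_bigr => t _.
by rewrite [\prod_(j < r) _](bigD1 o).
Qed.

Lemma dot_Axr1E_slot j w v :
  \sum_(t : r.-tuple 'I_n) adj E s t * (v (tnth t j) * \prod_(l < r | l != j) w (tnth t l))
  = dot (Axr1 r E s w) v.
Proof.
rewrite dot_Axr1E (reindex_inj (inv_inj (tuple_swapK j))).
apply: eq_bigr => t _; rewrite adj_tuple_swap tnth_mktuple tpermR.
congr (_ * (_ * _)); rewrite [RHS](reindex_inj (@perm_inj _ (tperm o j))) /=.
apply: eq_big => [l|l _]; last by rewrite tnth_mktuple.
by rewrite (can2_eq (tpermK o j) (tpermK o j)) tpermL.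
Qed.

Lemma sum_slots_Axr1 w v :
  \sum_(t : r.-tuple 'I_n) adj E s t *
     \sum_(j < r) (v (tnth t j) * \prod_(l < r | l != j) w (tnth t l))
  = r%:R * dot (Axr1 r E s w) v.
Proof.
under eq_bigr do rewrite mulr_sumr.
rewrite exchange_big /=; under eq_bigr do rewrite dot_Axr1E_slot.
by rewrite sumr_const card_ord mulr_natl.
Qed.

End SymmetricTensor.

Section Gradient.
Variables (R : realType) (n r pp : nat) (E : {set {set 'I_n}}) (s : {set 'I_n} -> R).
Hypotheses (r_gt0 : (0 < r)%N) (pp_gt0 : (0 < pp)%N).
Implicit Types (x : vec R n).

Lemma dot_gradf_self x : x <> (fun _ => 0) -> dot (gradf r pp E s x) x = 0.
Proof.
move=> x0; rewrite dot_gradf // dot_Axr1_self // dot_xpow_self //.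
by rewrite divfK ?subrr ?mulr0 // gt_eqF // abs_pow_sum_gt0.
Qed.

Definition fobj_ub : R := (r.-1)`!%:R * \sum_(t : r.-tuple 'I_n) `|adj E s t|.

Lemma fobj_le_ub x : x <> (fun _ => 0) -> fobj r pp E s x <= fobj_ub.
Proof.
move=> x0; have Nr_gt0 : 0 < normp pp x ^+ r by rewrite exprn_gt0 // normp_gt0.
have Axr_le : `|Axr r E s x| <= (\sum_(t : r.-tuple 'I_n) `|adj E s t|) * normp pp x ^+ r.
  rewrite /Axr mulr_suml; apply: le_trans (ler_norm_sum _ _ _) _.
  apply: ler_sum => t _; rewrite normrM ler_wpM2l // normr_prod.
  rewrite -[r in _ ^+ r]card_ord -prodr_const.
  by apply: ler_prod => j _; rewrite normr_ge0 abs_le_normp.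
rewrite /fobj /fobj_ub; apply: le_trans (ler_norm _) _.
rewrite normrM normfV normrM ger0_norm ?ler0n // (gtr0_norm Nr_gt0).
by rewrite -mulrA ler_wpM2l // ler_pdivrMr.
Qed.

End Gradient.

Section RealDerivatives.
Local Open Scope classical_set_scope.
Variable R : realType.

Lemma is_derive_big_sum (I : Type) (s : seq I) (P : pred I) (F : I -> R -> R)
    (dF : I -> R) (a : R) :
  (forall i, P i -> is_derive a 1 (F i) (dF i)) ->
  is_derive a 1 (fun b => \sum_(i <- s | P i) F i b) (\sum_(i <- s | P i) dF i).
Proof.
move=> dFi; elim: s => [|i s IH].
  by under [fun b => _]funext do rewrite big_nil; rewrite big_nil; exact: is_derive_cst.
under [fun b => _]funext do rewrite big_cons; rewrite big_cons.
by case: ifP => [/dFi dF_i|_]; first exact: is_deriveD.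
Qed.

Lemma is_derive_big_prod (I : eqType) (s : seq I) (F : I -> R -> R) (dF : I -> R)
    (a : R) : uniq s -> (forall i, is_derive a 1 (F i) (dF i)) ->
  is_derive a 1 (fun b => \prod_(i <- s) F i b)
    (\sum_(i <- s) dF i * \prod_(l <- s | l != i) F l a).
Proof.
move=> + dFi; elim: s => [_|i s IH /= /andP [i_notin_s /IH dprod]].
  by under [fun b => _]funext do rewrite big_nil; rewrite big_nil; exact: is_derive_cst.
under [fun b => _]funext do rewrite big_cons.
apply: is_derive_eq; rewrite /GRing.scale /= !big_cons eqxx /=.
have -> : \prod_(l <- s | l != i) F l a = \prod_(l <- s) F l a.
  rewrite big_seq_cond [RHS]big_seq; apply: eq_bigl => l.
  by case: (boolP (l \in s)) => //= /(memPn i_notin_s) ->.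
rewrite addrC mulrC mulr_sumr; congr (_ + _).
rewrite !big_seq; apply: eq_bigr => j js.
by rewrite big_cons eq_sym (memPn i_notin_s j js) mulrCA.
Qed.

Lemma is_derive_abs_pow (p : nat) (u : R) : (1 < p)%N ->
  is_derive u 1 (fun v : R => `|v| ^+ p) (p%:R * (`|u| ^+ p.-1 * Num.sg u)).
Proof.
move=> p_gt1; have [u_lt0|u_gt0|->] := ltgtP u 0.
- have dpow := is_deriveX p (is_deriveNid u (1 : R)).
  apply: is_derive_eq (near_eq_is_derive _ dpow) _.
    by near=> v; rewrite exprfctE ltr0_norm //; near: v; exact: lt_nbhsl.
  by rewrite /GRing.scale /= ltr0_norm // ltr0_sg //; ring.
- have dpow := is_deriveX p (is_derive_id u (1 : R)).
  apply: is_derive_eq (near_eq_is_derive _ dpow) _.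
    by near=> v; rewrite exprfctE gtr0_norm //; near: v; exact: lt_nbhsr.
  by rewrite /GRing.scale /= gtr0_norm // gtr0_sg //; ring.
rewrite sgr0 !mulr0; apply/is_derive1_caratheodory.
exists (fun v => v * `|v| ^+ (p - 2)); split; last by rewrite mul0r.
- move=> v; rewrite normr0 expr0n gtn_eqF ?(ltnW p_gt1) // !subr0.
  by rewrite -{1}(subnK p_gt1) exprD real_normK ?num_real //; ring.
apply: continuousM; first exact: cvg_id.
have abs_pow_cont :=
  continuous_comp (@norm_continuous _ R^o 0) (@exprn_continuous R (p - 2) _).
exact: abs_pow_cont.
Unshelve. all: by end_near.
Qed.

End RealDerivatives.

Section CurveDerivative.
Variables (R : realType) (n r pp : nat) (E : {set {set 'I_n}}) (s : {set 'I_n} -> R).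
Variables (z : R -> vec R n) (dz : vec R n) (a : R).
Hypothesis z_deriv : forall i, is_derive a 1 (fun b => z b i) (dz i).

Lemma is_derive_Axr : (0 < r)%N ->
  is_derive a 1 (fun b => Axr r E s (z b)) (r%:R * dot (Axr1 r E s (z a)) dz).
Proof.
move=> r_gt0; rewrite -(sum_slots_Axr1 E s r_gt0).
apply: is_derive_big_sum => t _.
have dprod := is_derive_big_prod (s := index_enum 'I_r) (F := fun j b => z b (tnth t j))
  (index_enum_uniq _) (fun j => z_deriv (tnth t j)).
by apply: is_derive_eq; rewrite /GRing.scale.
Qed.

Lemma is_derive_abs_pow_sum : (1 < pp)%N ->
  is_derive a 1 (fun b => abs_pow_sum pp (z b)) (pp%:R * dot (xpow pp (z a)) dz).
Proof.
move=> pp_gt1; rewrite /dot mulr_sumr.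
apply: is_derive_big_sum => i _; rewrite /xpow mulrA.
exact: is_derive1_comp (is_derive_abs_pow (z a i) pp_gt1) (z_deriv i).
Qed.

Lemma is_derive_fobj : (0 < r)%N -> (1 < pp)%N -> z a <> (fun _ => 0) ->
  is_derive a 1 (fun b => fobj r pp E s (z b)) (dot (gradf r pp E s (z a)) dz).
Proof.
move=> r_gt0 pp_gt1 za0; have pp_gt0 := ltnW pp_gt1.
have S_gt0 := abs_pow_sum_gt0 pp_gt0 za0; have N_gt0 := normp_gt0 pp_gt0 za0.
have dA := is_derive_Axr r_gt0.
pose dNa := normp pp (z a) / abs_pow_sum pp (z a) * dot (xpow pp (z a)) dz.
have dN : is_derive a 1 (fun b => normp pp (z b)) dNa.
  have := is_derive1_comp (is_derive1_powR pp%:R^-1 S_gt0) (is_derive_abs_pow_sum pp_gt1).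
  move=> dpow; apply: is_derive_eq; rewrite /dNa.
  rewrite powRB ?(gt_eqF S_gt0) ?implybT // powRr1 ?ltW // normpE.
  by field; rewrite pnatr_eq0 -lt0n pp_gt0 gt_eqF.
have dNr : is_derive a 1 (fun b => normp pp (z b) ^+ r)
    (r%:R * normp pp (z a) ^+ r.-1 * dNa).
  by have := is_deriveX r dN; under [_ ^+ r]funext do rewrite exprfctE.
have Nr0 : normp pp (z a) ^+ r != 0 by rewrite expf_neq0 // gt_eqF.
rewrite /fobj; apply: is_derive_eq; rewrite dot_gradf // /dNa /GRing.scale /=.
have -> : r`!%:R = r%:R * (r.-1)`!%:R :> R.
  by rewrite -natrM -{1}(prednK r_gt0) factS prednK.
have -> : normp pp (z a) ^+ r = normp pp (z a) ^+ r.-1 * normp pp (z a).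
  by rewrite -exprSr prednK.
by field; rewrite !gt_eqF ?exprn_gt0.
Qed.

End CurveDerivative.

Section AscentDirection.
Variables (R : realType) (n r pp : nat) (E : {set {set 'I_n}}) (s : {set 'I_n} -> R).
Hypotheses (r_gt0 : (0 < r)%N) (pp_gt0 : (0 < pp)%N).
Implicit Types (x g d y : vec R n) (tau : R).

(* 4 tau (RHS - LHS) is the squared norm of g - 2 tau (g.d / d.y) y. *)
Lemma hager_zhang_bound g d y tau : 0 < tau ->
  (1 - (4 * tau)^-1) * dot g g <=
  dot g g + (tau * dot y y / dot d y * dot d g - dot y g) / dot d y * dot g d.
Proof.
move=> tau_gt0; have [dy0|dy_neq0] := eqVneq (dot d y) 0.
  rewrite dy0 invr0 !(mulr0, mul0r) addr0 ler_piMl ?dot_self_ge0 //.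
  by rewrite lerBlDr lerDl invr_ge0 mulr_ge0 // ltW.
have sq := dot_self_ge0 (fun i => 1 * g i + (- (2 * tau * (dot g d / dot d y))) * y i).
have tau4_gt0 : 0 < 4 * tau by rewrite mulr_gt0.
rewrite -subr_ge0 -(pmulr_rge0 _ tau4_gt0); apply: le_trans sq _.
rewrite dot_lincomb_self (dotC d g) (dotC y g) le_eqVlt; apply/orP; left; apply/eqP.
by field; rewrite gt_eqF.
Qed.

Lemma beta_cases tau eps x' x :
  let d := vsub x x' in let y := vsub (gradf r pp E s x) (gradf r pp E s x') in
  beta r pp E s tau eps x' x = 0 \/
  beta r pp E s tau eps x' x =
    (tau * dot y y / dot d y * dot d (gradf r pp E s x) - dot y (gradf r pp E s x))
    / dot d y.
Proof. by rewrite /beta /=; case: ifP => _; rewrite maxEle; case: ifP; by [left|right]. Qed.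

Definition csrh_direction tau eps x' x : vec R n :=
  fun i => gradf r pp E s x i + beta r pp E s tau eps x' x * vsub x x' i.

Lemma csrh_direction_ascent tau eps x' x : 4^-1 < tau ->
  dot x x = 1 -> dot x' x' = 1 -> gradf r pp E s x <> (fun _ => 0) ->
  0 <= dot x (csrh_direction tau eps x' x) /\
  0 < dot (gradf r pp E s x) (csrh_direction tau eps x' x).
Proof.
move=> tau_gt4 x1 x'1 g0; rewrite /csrh_direction; set g := gradf r pp E s x.
have beta_ge0 : 0 <= beta r pp E s tau eps x' x by rewrite le_max lexx.
have gg_gt0 := dot_self_gt0 g0.
split.
  rewrite dot_addr_scale dotC (dot_gradf_self E s r_gt0 pp_gt0 (dot_unit_neq0 x1)) add0r.
  by rewrite mulr_ge0 // dot_vsubr x1 subr_ge0 dot_unit_le1.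
rewrite dot_addr_scale; have [->|->] := beta_cases tau eps x' x.
  by rewrite mul0r addr0.
have tau_gt0 : 0 < tau by apply: lt_trans tau_gt4; rewrite invr_gt0.
apply: lt_le_trans (hager_zhang_bound _ _ _ tau_gt0).
rewrite mulr_gt0 // subr_gt0 invf_lt1 ?mulr_gt0 //.
by rewrite -ltr_pdivrMl // mulr1.
Qed.

End AscentDirection.

Section LineSearch.
Local Open Scope classical_set_scope.
Variable R : realType.

Lemma is_derive_le0_left_max (f : R -> R) (a b d : R) : a < b ->
  is_derive a 1 f d -> (forall t, a < t -> t < b -> f t <= f a) -> d <= 0.
Proof.
move=> ab [f_derivable <-] fmax.
rewrite ['D_1 f a]cvg_at_rightE //; apply: limr_le.
  rewrite -(cvg_at_rightE (fun h : R => h^-1 *: ((f \o shift a) _ - f a))) //.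
  apply: cvg_trans f_derivable; apply: cvg_app.
  move=> A [e e_gt0 Ae]; exists e => // x xe x_gt0; apply: Ae => //.
  exact/lt0r_neq0.
near=> h; have h_gt0 : 0 < h by near: h; exists 1 => /=.
have h_lt : h < b - a.
  near: h; exists (b - a); first by rewrite /= subr_gt0.
  by move=> h; rewrite /= distrC subr0 => /(le_lt_trans (ler_norm _)).
apply: mulr_ge0_le0; first by rewrite invr_ge0 ltW.
rewrite subr_le0 [_%:A]mulr1 /=.
by apply: fmax; rewrite ?ltrDr //; lra.
Unshelve. all: by end_near.
Qed.

(* h(b) = phi b - phi 0 - c b phi'(0) starts increasing and eventually becomes
   negative, so it has an interior maximum on [0, A]. *)
Lemma wolfe_stationary_point (phi dphi : R -> R) (c M : R) :
  (forall b : R, is_derive b 1 phi (dphi b)) -> (forall b, phi b <= M) ->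
  0 < c -> c < 1 -> 0 < dphi 0 ->
  exists2 m, 0 < m & phi 0 + c * m * dphi 0 <= phi m /\ dphi m = c * dphi 0.
Proof.
move=> dphi_phi phi_le c_gt0 c_lt1 dphi0_gt0.
pose h b := phi b - phi 0 - c * b * dphi 0.
have dh (b : R) : is_derive b 1 h (dphi b - c * dphi 0).
  by apply: is_derive_eq; rewrite /GRing.scale /=; ring.
have cd_gt0 : 0 < c * dphi 0 by rewrite mulr_gt0.
pose A := (`|M - phi 0| + 1) / (c * dphi 0).
have A_gt0 : 0 < A by rewrite divr_gt0 // ltr_pwDr.
have hA_lt0 : h A < 0.
  have : c * A * dphi 0 = `|M - phi 0| + 1 by rewrite mulrAC mulrC divfK ?gt_eqF.
  by have := phi_le A; have := ler_norm (M - phi 0); rewrite /h; lra.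
have h_derivable (t : R) : derivable h t 1 by case: (dh t).
have h_cont : {within `[0, A], continuous h}.
  by apply: derivable_within_continuous => t _; exact: h_derivable.
have [m m_in hmax] := EVT_max (ltW A_gt0) h_cont.
have h0 : h 0 = 0 by rewrite /h mulr0 mul0r subrr subr0.
have hm_ge0 : 0 <= h m by rewrite -h0; apply: hmax; rewrite in_itv /= lexx ltW.
have m_neqA : m != A by apply: contraTneq hm_ge0 => ->; rewrite -ltNge.
have m_neq0 : m != 0.
  apply: contra_ltN dphi0_gt0 => /eqP m0.
  have : dphi 0 - c * dphi 0 <= 0.
    apply: is_derive_le0_left_max A_gt0 (dh 0) _ => t t_gt0 t_lt.
    by rewrite -m0; apply: hmax; rewrite in_itv /= !ltW.
  by rewrite -{1}[dphi 0]mul1r -mulrBl pmulr_rle0 ?subr_gt0.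
have m_itv : m \in `]0, A[%R.
  move: m_in; rewrite !in_itv /= => /andP [m_ge0 m_leA].
  by rewrite !lt_neqAle m_ge0 m_leA eq_sym m_neq0 m_neqA.
have dhm0 := derive1_at_max (ltW A_gt0) (fun t _ => h_derivable t) m_itv
  (fun t t_in => hmax t (subset_itv_oo_cc t_in)).
exists m; first by move: m_itv; rewrite in_itv /= => /andP [].
split; first by move: hm_ge0; rewrite /h; lra.
case: dhm0 => _ Dhm0; case: (dh m) => _; rewrite Dhm0 => /eqP.
by rewrite eq_sym subr_eq0 => /eqP.
Qed.

End LineSearch.

Section CurveLineSearch.
Variables (R : realType) (n r pp : nat) (E : {set {set 'I_n}}) (s : {set 'I_n} -> R).
Hypotheses (r_gt0 : (0 < r)%N) (pp_gt1 : (1 < pp)%N).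
Implicit Types (x p G : vec R n) (a : R).

Lemma dot_xnext_orth x p a G : dot x x = 1 -> dot G (xnext x p a) = 0 ->
  4 * dot G p = xnext_num x p a * dot G (xnext_vel x p a).
Proof.
move=> x1; have den0 := xnext_den_neq0 p a x1.
rewrite xnextE /xnext_vel !dot_lincombr => Gy0.
have -> : xnext_num x p a = xnext_cx x p a * xnext_den x p a by rewrite divfK.
have -> : forall gx gp : R,
    xnext_cx x p a * xnext_den x p a * (xnext_cx' x p a * gx + xnext_cp' x p a * gp) =
    xnext_den x p a * (xnext_cx' x p a * (xnext_cx x p a * gx + xnext_cp x p a * gp) +
      gp * (xnext_cx x p a * xnext_cp' x p a - xnext_cp x p a * xnext_cx' x p a)).
  by move=> gx gp; ring.
by rewrite Gy0 xnext_wronskian //; field.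
Qed.

Lemma wolfe_exists_on_sphere (c1 c2 : R) x p :
  0 < c1 -> c1 < c2 -> c2 < 1 -> dot x x = 1 ->
  0 <= dot x p -> 0 < dot (gradf r pp E s x) p ->
  exists a, 0 < a /\ wolfe r pp E s c1 c2 x p a.
Proof.
move=> c1_gt0 c12 c2_lt1 x1 xp_ge0 gp_gt0; have pp_gt0 := ltnW pp_gt1.
have y_neq0 a : xnext x p a <> (fun _ => 0) by apply/dot_unit_neq0/dot_xnext_self.
pose phi a := fobj r pp E s (xnext x p a).
pose dphi a := dot (gradf r pp E s (xnext x p a)) (xnext_vel x p a).
have dphi_phi a : is_derive a 1 phi (dphi a).
  exact: is_derive_fobj (fun i => is_derive_xnext p a i x1) r_gt0 pp_gt1 (y_neq0 a).
have phi_le a : phi a <= fobj_ub r E s by apply: fobj_le_ub.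
have dphi0 : dphi 0 = dot (gradf r pp E s x) p.
  rewrite /dphi xnext0 xnext_vel0 dot_lincombr mul1r.
  by rewrite (dot_gradf_self E s r_gt0 pp_gt0 (dot_unit_neq0 x1)) mulr0 add0r.
have dphi0_gt0 : 0 < dphi 0 by rewrite dphi0.
have [m m_gt0 [increase stationary]] :=
  wolfe_stationary_point dphi_phi phi_le c1_gt0 (lt_trans c12 c2_lt1) dphi0_gt0.
exists m; split => //; split; first by move: increase; rewrite /phi xnext0 dphi0.
have := dot_xnext_orth x1 (dot_gradf_self E s r_gt0 pp_gt0 (y_neq0 m)).
rewrite -/(dphi m) stationary dphi0 => curv.
have := xnext_num_le4 x1 (ltW m_gt0) xp_ge0.
have : c1 * dot (gradf r pp E s x) p < c2 * dot (gradf r pp E s x) p by rewrite ltr_pM2r.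
have : 0 < c1 * dot (gradf r pp E s x) p by rewrite mulr_gt0.
nra.
Qed.

End CurveLineSearch.

Section CSRHRun.
Variables (R : realType) (n r pp : nat) (E : {set {set 'I_n}}) (s : {set 'I_n} -> R).
Variables (c1 c2 tau eps : R) (xs ps : nat -> vec R n) (als : nat -> R) (k : nat).
Hypothesis run : csrh_run r pp E s c1 c2 tau eps xs ps als k.

Lemma csrh_run_unit j : (j <= k)%N -> dot (xs j) (xs j) = 1.
Proof.
case: run => x0_1 [_ step]; elim: j => [|j IH] j_le //.
by have [_ _ -> _] := step j j_le; apply/dot_xnext_self/IH/ltnW.
Qed.

Lemma csrh_run_ascent : (0 < r)%N -> (0 < pp)%N -> 4^-1 < tau ->
  gradf r pp E s (xs k) <> (fun _ => 0) ->
  0 <= dot (xs k) (ps k) /\ 0 < dot (gradf r pp E s (xs k)) (ps k).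
Proof.
move=> r_gt0 pp_gt0 tau_gt g0; have := csrh_run_unit (leqnn k).
case: run => _ [p0 step] xk1; have [k0|k_gt0] := posnP k.
  rewrite k0 in g0 xk1 *; rewrite p0 dotC.
  by rewrite (dot_gradf_self E s r_gt0 pp_gt0 (dot_unit_neq0 xk1)) lexx dot_self_gt0.
have k_pred_lt : (k.-1 < k)%N by rewrite ltn_predL.
have [_ _ _] := step k.-1 k_pred_lt; rewrite prednK // => ->.
exact (csrh_direction_ascent r_gt0 pp_gt0 eps tau_gt xk1 (csrh_run_unit (leq_pred k)) g0).
Qed.

End CSRHRun.

Theorem theorem3p5 (R : realType) (n r pp : nat)
  (E : {set {set 'I_n}}) (s : {set 'I_n} -> R)
  (hr : (2 <= r)%N) (hp : (2 <= pp)%N)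
  (hE : forall e, e \in E -> #|e| = r)
  (hs : forall e, e \in E -> 0 < s e)
  (c1 c2 tau eps : R)
  (hc1 : 0 < c1) (hc12 : c1 < c2) (hc2 : c2 < 1)
  (htau1 : 4^-1 < tau) (htau2 : tau < 1) (heps : 0 < eps)
  (xs ps : nat -> 'I_n -> R) (als : nat -> R) (k : nat)
  (hrun : csrh_run r pp E s c1 c2 tau eps xs ps als k)
  (hg : gradf r pp E s (xs k) <> (fun _ => 0)) :
  exists a : R, 0 < a /\ wolfe r pp E s c1 c2 (xs k) (ps k) a.
Proof.
have r_gt0 : (0 < r)%N by apply: leq_trans hr.
have [xp_ge0 gp_gt0] := csrh_run_ascent hrun r_gt0 (ltnW hp) htau1 hg.
have xk1 := csrh_run_unit hrun (leqnn k).
exact (wolfe_exists_on_sphere r_gt0 hp hc1 hc12 hc2 xk1 xp_ge0 gp_gt0).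
Qed.
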